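(* For any collective choice problem $\mathcal C$: (a) The set of Unimprovable policies equals $\{x\in X: x\in\Phi^{\mathrm{or}}(x)\}$. (b) For any policies $x,y$, $y\in\Phi^{\mathrm{or}}(x)$ if and only if $y$ is the outcome of some Non-Capricious equilibrium of the one-round game with initial default $x$.
   Context: Collective choice problem $\mathcal C$: voters $N=\{1,\dots,n\}$ ($n$ odd), agenda setter $A$, compact metrizable policy space $X$, continuous preferences $\succsim_i$ with continuous utilities $u_i$. $y\succsim_M x$ (resp. $y\succ_M x$): a strict majority of voters weakly (resp. strictly) prefer $y$ to $x$. $x$ is Unimprovable if no $y$ satisfies $y\succ_A x$ and $y\succ_M x$. Define $M^{w}(x)=\{y: y\succsim_M x\}$, $M^{s}(x)=\{y: y\succ_M x\}$, $M^{as}(x)=\mathrm{cl}[M^{s}(x)]\cup\{x\}$, $V_A^{as}(x)=\max_{y\in M^{as}(x)}u_A(y)$, and $\Phi^{\mathrm{or}}(x)=\{y\in X: y\in M^{w}(x),\ u_A(y)\ge V_A^{as}(x)\}$. One-round game with default $x$: the agenda setter proposes $a\in X$ (possibly mixed), voters vote simultaneously; $a$ is implemented if a majority approves, otherwise $x$. Equilibrium: subgame perfect equilibrium with as-if-pivotal voting (voters with a strict preference between the outcomes of passage and rejection vote for the preferred one). Non-Capricious: (a) the mapping from histories to continuation outcomes is deterministic and depends only on the current default and number of remaining rounds; (b) for each voter $i$ and distinct $x',y'$ with $x'\sim_i y'$, at all history–proposal pairs where acceptance yields continuation outcome $x'$ and rejection yields $y'$, voter $i$ always votes for or always votes against the proposal.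 *)

From HB Require Import structures.
From mathcomp Require Import all_boot all_order all_algebra.
From mathcomp Require Import all_classical all_reals all_analysis.
Set Implicit Arguments.
Unset Strict Implicit.
Unset Printing Implicit Defensive.
Import Order.TTheory GRing.Theory Num.Theory numFieldNormedType.Exports.
Local Open Scope classical_set_scope.
Local Open Scope ring_scope.

(* Collective choice problem: R the reals, X the policy space (a pointed
   metric space; compactness and Hausdorffness are hypotheses of the
   theorem), n voters indexed by 'I_n with utilities u i, agenda setter
   with utility uA.  Preferences are represented by these utilities. *)

Section CollectiveChoice.
Context {R : realType} {X : pseudoPMetricType R} {n : nat}.
Variables (u : 'I_n -> X -> R) (uA : X -> R).

Definition wmaj (y x : X) : Prop :=
  (n < 2 * #|[set i : 'I_n | (u i x <= u i y)%R]|)%N.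
Definition smaj (y x : X) : Prop :=
  (n < 2 * #|[set i : 'I_n | (u i x < u i y)%R]|)%N.

Definition unimprovable (x : X) : Prop :=
  ~ exists y : X, uA x < uA y /\ smaj y x.

Definition Mw (x : X) : set X := [set y | wmaj y x].
Definition Ms (x : X) : set X := [set y | smaj y x].
Definition Mas (x : X) : set X := closure (Ms x) `|` [set x].
(* V_A^as(x) = max_{y in M^as(x)} u_A(y); written as a supremum, which is
   the maximum whenever it is attained (it is, by compactness). *)
Definition VAas (x : X) : R := sup [set uA y | y in Mas x].
Definition Phi_or (x : X) : set X := [set y | y \in Mw x /\ VAas x <= uA y].

Definition borelX := g_sigma_algebraType (@open X).

Definition passes (vote : 'I_n -> X -> bool) (a : X) : bool :=
  (n < 2 * #|[set i : 'I_n | vote i a]|)%N.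

Definition res (x : X) (vote : 'I_n -> X -> bool) (a : X) : X :=
  if passes vote a then a else x.

(* Subgame perfect equilibrium with as-if-pivotal voting, where the setter
   may mix over proposals (sigma a Borel probability measure on X) and
   voting strategies are (pure, Borel measurable) functions of the
   proposal. *)
Definition equilibrium (x : X) (sigma : probability borelX R)
    (vote : 'I_n -> X -> bool) : Prop :=
  (* measurability of voting strategies (so that expected payoffs exist) *)
  (forall i : 'I_n, measurable ([set a | vote i a] : set borelX)) /\
  (forall (i : 'I_n) (vote' : 'I_n -> X -> bool),
      (forall j : 'I_n, j != i -> vote' j =1 vote j) ->
      forall a : X, u i (res x vote' a) <= u i (res x vote a)) /\
  (* as-if-pivotal voting: outcome of passage is a, of rejection is x *)
  (forall (i : 'I_n) (a : X), u i x < u i a -> vote i a) /\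
  (forall (i : 'I_n) (a : X), u i a < u i x -> ~~ vote i a) /\
  (forall tau : probability borelX R,
      (\int[tau]_a (uA (res x vote a))%:E <=
       \int[sigma]_a (uA (res x vote a))%:E)%E).

(* Non-Capricious, specialised to the one-round game with default x and
   deterministic continuation outcome y:
   (a) the continuation outcome from the (unique) initial history is the
       deterministic policy y;
   (b) for every voter i and distinct x' ~_i y', at all proposals where
       acceptance yields x' and rejection yields y' (here: acceptance
       yields the proposal a, rejection yields the default x) voter i
       votes the same way. *)
Definition noncapricious (x : X) (sigma : probability borelX R)
    (vote : 'I_n -> X -> bool) (y : X) : Prop :=
  sigma ([set a | res x vote a = y] : set borelX) = 1%E /\
  (forall (i : 'I_n) (x' y' : X), x' <> y' -> u i x' = u i y' ->
     forall a1 a2 : X, a1 = x' -> x = y' -> a2 = x' -> x = y' ->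
       vote i a1 = vote i a2).

Definition nc_eq_outcome (x y : X) : Prop :=
  exists (sigma : probability borelX R) (vote : 'I_n -> X -> bool),
    equilibrium x sigma vote /\ noncapricious x sigma vote y.

End CollectiveChoice.

From Pilot Require Import Defs.
From HB Require Import structures.
From mathcomp Require Import all_boot all_order all_algebra.
From mathcomp Require Import all_classical all_reals all_analysis.
From mathcomp Require Import zify measurable_realfun.
Import Order.TTheory GRing.Theory Num.Theory numFieldNormedType.Exports.
Local Open Scope classical_set_scope.
Local Open Scope ring_scope.

(* (a) By continuity of u_A, u_A <= c on M^as(x) = cl(M^s(x)) U {x} as soon as
   u_A <= c on M^s(x) and at x, so x is in Phi^or(x) iff no policy preferred
   by a strict majority is better for the setter, i.e. iff x is Unimprovable.
   (b) Given y in Phi^or(x), let each voter approve a proposal iff she strictly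
   prefers it to x, or weakly prefers it and it is y.  Then y passes, every
   other passing proposal lies in M^s(x) and every rejected one yields x, so
   the setter gets at most V_A^as(x) <= u_A(y) from any proposal and proposing
   y for sure is optimal.  Conversely, if an equilibrium yields y almost surely,
   Dirac deviations of the setter bound u_A by u_A(y) on all outcomes, hence
   on M^s(x) (these proposals pass under as-if-pivotal voting) and at x, and y
   is either x or a proposal approved by a majority none of whom strictly
   prefers x. *)

(* As in Defs, [set i | P i] is a classical set here (classical_set_scope),
   counted through its membership predicate. *)
Lemma majority_mono {n} {P Q : pred 'I_n} : (n < 2 * #|[set i | P i]|)%N ->
  (forall i, P i -> Q i) -> (n < 2 * #|[set i | Q i]|)%N.
Proof.
move=> /leq_trans + PQ; apply; rewrite leq_mul2l /=.
by apply/subset_leq_card/fintype.subsetP => i /set_mem /PQ /mem_set.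
Qed.

Lemma majority_all n (P : pred 'I_n) : (0 < n)%N -> (forall i, P i) ->
  (n < 2 * #|[set i | P i]|)%N.
Proof.
move=> n_gt0 allP; rewrite eq_cardT => [|i]; last exact: (mem_set (allP i)).
by rewrite -cardE card_ord; lia.
Qed.

Lemma compact_continuous_image_ubound {R : realType} {T : ptopologicalType}
    {f : T -> R} (A : set T) :
  compact [set: T] -> continuous f -> has_ubound [set f y | y in A].
Proof.
move=> T_compact f_cont.
have [||c _ maxc] := @compact_EVT_max T R f setT _ T_compact.
- by exists point.
- exact: continuous_subspaceT.
by exists (f c) => _ [y _ <-]; apply: maxc; rewrite inE.
Qed.

Lemma continuous_closure_le {R : realType} {T : topologicalType} {f : T -> R}
    {A : set T} {c : R} : continuous f -> (forall z, A z -> f z <= c) ->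
  forall z, closure A z -> f z <= c.
Proof.
move=> f_cont Ac z Az.
have /closure_id cl : closed (f @^-1` [set r | r <= c]).
  by apply: preimage_closed => [? _|]; [exact: f_cont | exact: closed_le].
change ((f @^-1` [set r | r <= c]) z); rewrite cl; exact: (closureS Ac) z Az.
Qed.

Section BorelSets.
Context {T : ptopologicalType}.
Local Notation borel := (g_sigma_algebraType (@open T)).

Lemma open_measurable_borel (A : set T) : open A -> measurable (A : set borel).
Proof. exact: sub_sigma_algebra. Qed.

Lemma closed_measurable_borel (A : set T) :
  closed A -> measurable (A : set borel).
Proof.
move=> cA; rewrite -[A]setCK; apply: measurableC.
by apply: open_measurable_borel; exact: closed_openC.
Qed.

Lemma set1_measurable_borel (y : T) :
  hausdorff_space T -> measurable ([set y] : set borel).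
Proof.
move=> hT; apply: closed_measurable_borel.
by apply: accessible_closed_set1; exact: hausdorff_accessible.
Qed.

Lemma continuous_measurable_borel {R : realType} {f : T -> R} :
  continuous f -> measurable_fun (setT : set borel) f.
Proof.
move=> f_cont; apply: (measurability _ (RGenOpens.measurableE R)).
move=> _ [_ [a [b ->]] <-]; rewrite setTI; apply: open_measurable_borel.
by move/continuousP: f_cont; apply; exact: interval_open.
Qed.

End BorelSets.

Section ProbabilityIntegral.
Context {d : measure_display} {T : measurableType d} {R : realType}.
Variable P : probability T R.
Local Open Scope ereal_scope.

Lemma probability_integral_cst (c : \bar R) : \int[P]_x (cst c) x = c.
Proof.
rewrite integral_cst //; set m := (X in _ * X).
have -> : m = 1 by exact: probability_setT.
exact: mule1.
Qed.

Lemma probability_integral_le_cst (f : T -> \bar R) (c : R) :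
  measurable_fun setT f -> (forall x, f x <= c%:E) -> \int[P]_x f x <= c%:E.
Proof.
move=> mf fc; rewrite -[leRHS](probability_integral_cst c%:E).
have mc : measurable_fun setT (cst c%:E : T -> \bar R) by exact: measurable_cst.
rewrite integralE [leRHS]integralE; apply: leeB.
- apply: ge0_le_integral => //; [exact: measurable_funepos..|].
  move=> x _; apply: (@funepos_le _ _ setT); last exact: mem_set.
  by move=> y _; exact: fc.
- apply: ge0_le_integral => //; [exact: measurable_funeneg..|].
  move=> x _; apply: (@funeneg_le _ _ setT); last exact: mem_set.
  by move=> y _; exact: fc.
Qed.

Lemma probability_integral_ae_cst {S : set T} {f : T -> \bar R} {c : \bar R} :
  measurable S -> P S = 1 -> measurable_fun setT f ->
  (forall x, S x -> f x = c) -> \int[P]_x f x = c.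
Proof.
move=> mS PS1 mf fS.
rewrite (ae_eq_integral (cst c)) ?probability_integral_cst //.
exists (~` S); split; first exact: measurableC.
  by have := probability_setC P mS; rewrite PS1 subee.
by move=> x /= nfx Sx; apply: nfx => _; exact: fS.
Qed.

Lemma probability1_nonempty {S : set T} : P S = 1 -> S !=set0.
Proof.
move=> PS1; apply/set0P/eqP => S0; move: PS1; rewrite S0 measure0.
by move/eqP; rewrite eq_sym onee_eq0.
Qed.

End ProbabilityIntegral.

Section CollectiveChoice.
Context {R : realType} {X : pseudoPMetricType R} {n : nat}.
Variables (u : 'I_n -> X -> R) (uA : X -> R).
Hypotheses (X_compact : compact [set: X]) (X_hausdorff : hausdorff_space X).
Hypotheses (n_odd : odd n) (u_cont : forall i, continuous (u i)).
Hypothesis uA_cont : continuous uA.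

Lemma wmaj_refl x : wmaj u x x.
Proof. by apply: majority_all => //; move: n_odd; case: (n). Qed.

Lemma VAas_leP x c :
  VAas u uA x <= c <-> uA x <= c /\ (forall z, Ms u x z -> uA z <= c).
Proof.
split=> [VAc | [xc Msc]].
- have le_VAas z : Mas u x z -> uA z <= VAas u uA x.
    move=> Mz; apply: ub_le_sup; last by exists z.
    exact: compact_continuous_image_ubound.
  split=> [|z Mz]; apply: le_trans VAc; apply: le_VAas; first by right.
  by left; exact: subset_closure.
- apply: ge_sup; first by exists (uA x), x => //; right.
  by move=> _ [z [Mz|->] <-] //; exact: (continuous_closure_le uA_cont Msc).
Qed.

Lemma unimprovableP x :
  unimprovable u uA x <-> forall z, Ms u x z -> uA z <= uA x.
Proof.
split=> [not_impr z Mz | ub [z [lt_xz Mz]]].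
- by rewrite leNgt; apply/negP => lt_xz; apply: not_impr; exists z.
- by have := ub z Mz; rewrite leNgt lt_xz.
Qed.

Lemma Phi_orP x y : y \in Phi_or u uA x <->
  [/\ wmaj u y x, uA x <= uA y & forall z, Ms u x z -> uA z <= uA y].
Proof.
rewrite in_setE /Phi_or /= in_setE.
by split=> [[? /VAas_leP[]] | [? ? ?]]; split=> //; apply/VAas_leP.
Qed.

Lemma unimprovable_Phi_or x : unimprovable u uA x <-> x \in Phi_or u uA x.
Proof.
split=> [/unimprovableP ub | /Phi_orP[_ _ ub]]; last exact/unimprovableP.
by apply/Phi_orP; split=> //; exact: wmaj_refl.
Qed.

Local Notation borel := (@borelX R X).

Lemma passes_mono {vote vote' : 'I_n -> X -> bool} {a : X} :
  passes vote a -> (forall i, vote i a -> vote' i a) -> passes vote' a.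
Proof. exact: majority_mono. Qed.

Lemma passes_deviation {vote vote' : 'I_n -> X -> bool} {i : 'I_n} {a : X} :
  (forall j, j != i -> vote' j a = vote j a) ->
  passes vote' a -> ~~ passes vote a -> vote' i a && ~~ vote i a.
Proof.
move=> others pass' fail; apply/negPn/negP => /nandP dev.
move/negP: fail; apply; apply: (passes_mono pass') => j.
case: (eqVneq j i) => [-> | /others -> //].
by case: dev => [/negbTE | /negbNE] ->.
Qed.

Lemma sincere_best_response x (vote vote' : 'I_n -> X -> bool) i a :
  (forall j, j != i -> vote' j a = vote j a) ->
  (vote i a -> u i x <= u i a) -> (~~ vote i a -> u i a <= u i x) ->
  u i (res x vote' a) <= u i (res x vote a).
Proof.
move=> others yes no; rewrite /res.
case: ifPn => pass'; case: ifPn => pass //.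
- by case/andP: (passes_deviation others pass' pass) => _ /no.
- have others' j : j != i -> vote j a = vote' j a by move/others.
  by case/andP: (passes_deviation others' pass pass') => /yes.
Qed.

Lemma passes_measurable {vote : 'I_n -> X -> bool} :
  (forall i, measurable ([set a | vote i a] : set borel)) ->
  measurable ([set a | passes vote a] : set borel).
Proof.
move=> mvote.
have -> : [set a | passes vote a] =
    \bigcup_(S in [set S : {set 'I_n} | (n < 2 * #|S|)%N])
      \bigcap_(i in [set i | i \in S]) [set a | vote i a].
  apply/seteqP; split=> a /=.
  - move=> pass; exists (finset (vote^~ a)); last by move=> i /=; rewrite inE.
    apply: leq_trans pass _; rewrite leq_mul2l subset_leq_card //.
    by apply/fintype.subsetP => i /set_mem; rewrite inE.
  - move=> [S maj Svote]; apply: leq_trans maj _.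
    rewrite leq_mul2l subset_leq_card //.
    by apply/fintype.subsetP => i iS; apply: mem_set; exact: Svote.
apply: fin_bigcup_measurable; first exact: finite_finset.
move=> S _; apply: fin_bigcap_measurable; first exact: finite_finset.
by move=> i _; exact: mvote.
Qed.

Lemma res_measurable x {vote : 'I_n -> X -> bool} :
  (forall i, measurable ([set a | vote i a] : set borel)) ->
  measurable_fun (setT : set borel) (res x vote : borel -> borel).
Proof.
move=> mvote.
apply: measurable_fun_ifT; [|exact: measurable_id | exact: measurable_cst].
by apply: (measurable_fun_bool true); rewrite setTI; exact: passes_measurable.
Qed.

Lemma payoff_measurable x {vote : 'I_n -> X -> bool} :
  (forall i, measurable ([set a | vote i a] : set borel)) ->
  measurable_fun (setT : set borel) (fun a => (uA (res x vote a))%:E).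
Proof.
move=> mvote; apply/measurable_EFinP.
apply: (measurableT_comp (continuous_measurable_borel uA_cont)).
exact: res_measurable.
Qed.

Definition tiebreak_vote (x y : X) (i : 'I_n) (a : X) : bool :=
  (u i x < u i a) || `[< a = y >] && (u i x <= u i a).

Lemma tiebreak_vote_measurable x y i :
  measurable ([set a | tiebreak_vote x y i a] : set borel).
Proof.
have -> : [set a | tiebreak_vote x y i a] = u i @^-1` [set r | u i x < r]
    `|` ([set y] `&` u i @^-1` [set r | u i x <= r]).
  apply/seteqP; split=> a /=.
  - by case/orP => [|/andP[/asboolP ->]]; [left | right].
  - case=> [lt_xa | [-> le_xa]]; rewrite /tiebreak_vote ?lt_xa //.
    by rewrite asboolT // le_xa orbT.
apply: measurableU.
  apply: open_measurable_borel.
  by move/continuousP: (u_cont i); apply; exact: open_gt.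
apply: measurableI; first exact: set1_measurable_borel.
apply: closed_measurable_borel.
by move/continuous_closedP: (u_cont i); apply; exact: closed_ge.
Qed.

Lemma tiebreak_vote_yes x y i a : tiebreak_vote x y i a -> u i x <= u i a.
Proof. by rewrite /tiebreak_vote => /orP[/ltW | /andP[]]. Qed.

Lemma tiebreak_vote_no x y i a : ~~ tiebreak_vote x y i a -> u i a <= u i x.
Proof. by rewrite /tiebreak_vote negb_or -leNgt => /andP[]. Qed.

Lemma passes_tiebreak_vote x y : wmaj u y x -> passes (tiebreak_vote x y) y.
Proof.
move=> wyx; apply: (majority_mono wyx) => i le_xy.
by rewrite /tiebreak_vote asboolT // le_xy orbT.
Qed.

Lemma passes_tiebreak_vote_smaj {x y a : X} : a <> y ->
  passes (tiebreak_vote x y) a -> smaj u a x.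
Proof.
by move=> ay pass; apply: (majority_mono pass) => i /orP[|/andP[/asboolP]].
Qed.

Lemma Phi_or_nc_eq_outcome x y : y \in Phi_or u uA x -> nc_eq_outcome u uA x y.
Proof.
case/Phi_orP => [wyx le_xy Ms_le_y].
pose vote := tiebreak_vote x y.
have mvote := tiebreak_vote_measurable x y.
have res_y : res x vote y = y by rewrite /res passes_tiebreak_vote.
have res_le a : uA (res x vote a) <= uA y.
  rewrite /res; case: ifP => // pass; have [-> // | ay] := pselect (a = y).
  exact: Ms_le_y (passes_tiebreak_vote_smaj ay pass).
exists \d_(y : borel), vote.
split; [split; [|split; [|split; [|split]]] | split].
- exact: mvote.
- move=> i vote' others a; apply: sincere_best_response.
  + by move=> j /others ->.
  + exact: tiebreak_vote_yes.
  + exact: tiebreak_vote_no.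
- by move=> i a lt_xa; rewrite /vote /tiebreak_vote lt_xa.
- by move=> i a lt_ax; apply/negP => /tiebreak_vote_yes; rewrite leNgt lt_ax.
- move=> tau; rewrite integral_dirac //=; last exact: payoff_measurable.
  rewrite diracT mul1e res_y; apply: probability_integral_le_cst => //.
  exact: payoff_measurable.
- transitivity (@dirac _ borel y R [set a | res x vote a = y]) => //.
  by rewrite diracE mem_set.
- (* both proposals are x', so the non-capricious condition holds trivially *)
  by move=> i x' y' _ _ a1 a2 -> _ -> _.
Qed.

Lemma nc_eq_outcome_Phi_or x y : nc_eq_outcome u uA x y -> y \in Phi_or u uA x.
Proof.
move=> [sigma [vote [[mvote [_ [yes [no opt]]]] [sigma_y _]]]].
have mS : measurable ([set a | res x vote a = y] : set borel).
  have := res_measurable x mvote measurableT _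
    (set1_measurable_borel y X_hausdorff).
  by rewrite setTI.
have int_y : (\int[sigma]_a (uA (res x vote a))%:E = (uA y)%:E)%E.
  apply: (probability_integral_ae_cst sigma mS sigma_y).
    exact: payoff_measurable.
  by move=> a /= ->.
have res_le a : uA (res x vote a) <= uA y.
  have := opt \d_(a : borel); rewrite int_y integral_dirac //.
    by rewrite diracT mul1e lee_fin.
  exact: payoff_measurable.
have [a /= res_a] := probability1_nonempty sigma sigma_y.
apply/Phi_orP; split.
- move: res_a; rewrite /res; case: ifP => [pass | _] <-; last exact: wmaj_refl.
  apply: (majority_mono pass) => i via; rewrite leNgt; apply/negP => /no.
  by rewrite via.
- by have := res_le x; rewrite /res; case: ifP.
- move=> z Mz; have pass : passes vote z by apply: (majority_mono Mz) => i /yes.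
  by have := res_le z; rewrite /res pass.
Qed.

End CollectiveChoice.

Theorem lemma4 (R : realType) (X : pseudoPMetricType R) (n : nat)
  (u : 'I_n -> X -> R) (uA : X -> R)
  (hX_compact : compact [set: X]) (hX_hausdorff : hausdorff_space X)
  (hn_odd : odd n)
  (hu_cont : forall i : 'I_n, continuous (u i)) (huA_cont : continuous uA) :
  [set x | unimprovable u uA x] = [set x | x \in Phi_or u uA x] /\
  (forall x y : X, y \in Phi_or u uA x <-> nc_eq_outcome u uA x y).
Proof.
have impr_Phi := unimprovable_Phi_or u uA hX_compact hn_odd huA_cont.
split; first by apply/seteqP; split=> x /impr_Phi.
move=> x y; split; first exact: Phi_or_nc_eq_outcome.
exact: nc_eq_outcome_Phi_or.
Qed.
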